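(* Let $\Gamma$ be a finitely generated group with finite symmetric generating set $S$, $\rho\colon\Gamma\curvearrowright\mathcal H$ an affine action on a Hilbert space and $f\colon\Gamma\to\mathcal H$ a $\rho$-equivariant map. Then for all $x\in\Gamma$, $$\|\Delta Hf(x)\|\le\max_{x'\in x(S\cup\{e\})}\|\Delta f(x')\|,$$ and if equality holds for some $x$, then $\Delta f$ is a constant vector independent of $x\in\Gamma$.
   Context: $f$ is $\rho$-equivariant if $f(\gamma x)=\rho(\gamma)(f(x))$ for all $\gamma,x$. Averaging operator: $Hf(x)=\frac12\big(\frac1{\#S}\sum_{s\in S}f(xs)+f(x)\big)$; Laplacian: $\Delta f=(1-H)f$, i.e. $\Delta f(x)=\frac1{2\#S}\sum_{s\in S}(f(x)-f(xs))$. $x(S\cup\{e\})=\{xs:s\in S\}\cup\{x\}$. *)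

From Stdlib Require Import Reals List.
Import ListNotations.
Open Scope R_scope.

Record HilbertSpace := {
  hcarrier :> Type;
  vadd : hcarrier -> hcarrier -> hcarrier;
  vzero : hcarrier;
  vopp : hcarrier -> hcarrier;
  vscal : R -> hcarrier -> hcarrier;
  inner : hcarrier -> hcarrier -> R;
  vadd_assoc : forall u v w, vadd u (vadd v w) = vadd (vadd u v) w;
  vadd_comm : forall u v, vadd u v = vadd v u;
  vadd_0 : forall u, vadd u vzero = u;
  vadd_opp : forall u, vadd u (vopp u) = vzero;
  vscal_distr_v : forall a u v, vscal a (vadd u v) = vadd (vscal a u) (vscal a v);
  vscal_distr_s : forall a b u, vscal (a + b) u = vadd (vscal a u) (vscal b u);
  vscal_assoc : forall a b u, vscal a (vscal b u) = vscal (a * b) u;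
  vscal_1 : forall u, vscal 1 u = u;
  inner_sym : forall u v, inner u v = inner v u;
  inner_add_l : forall u v w, inner (vadd u v) w = inner u w + inner v w;
  inner_scal_l : forall a u v, inner (vscal a u) v = a * inner u v;
  inner_pos : forall u, 0 <= inner u u;
  inner_def : forall u, inner u u = 0 -> u = vzero;
  complete : forall u : nat -> hcarrier,
    (forall eps, eps > 0 -> exists N, forall m n, (N <= m)%nat -> (N <= n)%nat ->
        sqrt (inner (vadd (u m) (vopp (u n))) (vadd (u m) (vopp (u n)))) < eps) ->
    exists l, forall eps, eps > 0 -> exists N, forall n, (N <= n)%nat ->
        sqrt (inner (vadd (u n) (vopp l)) (vadd (u n) (vopp l))) < eps
}.

Arguments vadd {_}. Arguments vzero {_}. Arguments vopp {_}.
Arguments vscal {_}. Arguments inner {_}.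

Definition vsub {V : HilbertSpace} (u v : V) : V := vadd u (vopp v).
Definition hnorm {V : HilbertSpace} (u : V) : R := sqrt (inner u u).

Definition vsum {V : HilbertSpace} {A : Type} (l : list A) (F : A -> V) : V :=
  fold_right (fun a acc => vadd (F a) acc) vzero l.

Definition is_linear {V : HilbertSpace} (L : V -> V) : Prop :=
  (forall u v, L (vadd u v) = vadd (L u) (L v)) /\
  (forall a u, L (vscal a u) = vscal a (L u)).

Definition is_affine {V : HilbertSpace} (A : V -> V) : Prop :=
  exists L b, is_linear L /\ forall v, A v = vadd (L v) b.

Definition is_group {G : Type} (mul : G -> G -> G) (inv : G -> G) (e : G) : Prop :=
  (forall x y z, mul x (mul y z) = mul (mul x y) z) /\
  (forall x, mul e x = x) /\ (forall x, mul x e = x) /\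
  (forall x, mul x (inv x) = e) /\ (forall x, mul (inv x) x = e).

Definition generates {G : Type} (mul : G -> G -> G) (inv : G -> G) (e : G)
  (S : list G) : Prop :=
  forall P : G -> Prop,
    P e -> (forall x y, P x -> P y -> P (mul x y)) -> (forall x, P x -> P (inv x)) ->
    (forall s, In s S -> P s) -> forall g, P g.

Definition fin_sym_gen_set {G : Type} (mul : G -> G -> G) (inv : G -> G) (e : G)
  (S : list G) : Prop :=
  NoDup S /\ S <> [] /\ (forall s, In s S -> In (inv s) S) /\ generates mul inv e S.

Definition is_affine_action {G : Type} (mul : G -> G -> G) (e : G)
  {V : HilbertSpace} (rho : G -> V -> V) : Prop :=
  (forall g, is_affine (rho g)) /\
  (forall v, rho e v = v) /\
  (forall g h v, rho (mul g h) v = rho g (rho h v)).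

Definition equivariant {G : Type} (mul : G -> G -> G) {V : HilbertSpace}
  (rho : G -> V -> V) (f : G -> V) : Prop :=
  forall g x, f (mul g x) = rho g (f x).

Definition Hop {G : Type} (mul : G -> G -> G) (S : list G) {V : HilbertSpace}
  (f : G -> V) : G -> V :=
  fun x => vscal (1/2)
    (vadd (vscal (1 / INR (length S)) (vsum S (fun s => f (mul x s)))) (f x)).

Definition Lap {G : Type} (mul : G -> G -> G) (S : list G) {V : HilbertSpace}
  (f : G -> V) : G -> V :=
  fun x => vsub (f x) (Hop mul S f x).

Definition max_nbhd {G : Type} (mul : G -> G -> G) (S : list G) (g : G -> R) (x : G) : R :=
  fold_right (fun s acc => Rmax (g (mul x s)) acc) (g x) S.

(* Delta commutes with H, so Delta H f (x) = H (Delta f) (x) is the average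
   (1/2)(mean_s Delta f (xs) + Delta f (x)).  By the variance identity in a Hilbert
   space, the norm of such an average is at most the largest norm of the averaged
   vectors, with equality only if they all coincide.  Equality at x0 thus gives
   Delta f (x0 s) = Delta f (x0) for s in S.  As Delta f (g x) = L_g (Delta f (x))
   with L_g the linear part of rho g, this invariance moves from x0 to every
   point, and since S generates the group, Delta f is constant. *)
From Stdlib Require Import Reals List Lra Lia FunctionalExtensionality.
Import ListNotations.
Open Scope R_scope.

Section VectorAlgebra.
Variable V : HilbertSpace.
Implicit Types u v w a b c d : V.

Lemma vadd_0_l u : vadd vzero u = u.
Proof. rewrite vadd_comm; apply vadd_0. Qed.

Lemma vadd_cancel_r u v w : vadd u w = vadd v w -> u = v.
Proof.
  intro H.
  rewrite <- (vadd_0 _ u), <- (vadd_0 _ v), <- (vadd_opp _ w), !vadd_assoc, H.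
  reflexivity.
Qed.

Lemma vscal_0 u : vscal 0 u = vzero.
Proof.
  apply (vadd_cancel_r _ _ (vscal 0 u)).
  rewrite <- vscal_distr_s, Rplus_0_l, vadd_0_l; reflexivity.
Qed.

Lemma vadd_vaddC a b c d : vadd (vadd a b) (vadd c d) = vadd (vadd a c) (vadd b d).
Proof.
  rewrite <- !vadd_assoc; f_equal.
  rewrite !vadd_assoc; f_equal; apply vadd_comm.
Qed.

Lemma vsub_scal u v : vsub u v = vadd u (vscal (-1) v).
Proof.
  unfold vsub; f_equal.
  apply (vadd_cancel_r _ _ v).
  rewrite vadd_comm, vadd_opp.
  rewrite <- (vscal_1 V v) at 2; rewrite <- vscal_distr_s.
  replace (-1 + 1) with 0 by ring; symmetry; apply vscal_0.
Qed.

Lemma vscal_sub (k : R) u v : vscal k (vsub u v) = vsub (vscal k u) (vscal k v).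
Proof. rewrite !vsub_scal, vscal_distr_v, !vscal_assoc, Rmult_comm; reflexivity. Qed.

Lemma vsub_vaddC a b c d : vadd (vsub a b) (vsub c d) = vsub (vadd a c) (vadd b d).
Proof. rewrite !vsub_scal, (vscal_distr_v _ _ b d); apply vadd_vaddC. Qed.

Lemma vsub_addr u v w : vsub (vadd u w) (vadd v w) = vsub u v.
Proof. rewrite <- vsub_vaddC; unfold vsub at 2; rewrite vadd_opp, vadd_0; reflexivity. Qed.

Lemma vsub_eq0 u v : vsub u v = vzero -> u = v.
Proof.
  intro H; rewrite <- (vadd_0_l v), <- H; unfold vsub.
  rewrite <- vadd_assoc, (vadd_comm _ (vopp v) v), vadd_opp, vadd_0; reflexivity.
Qed.

Lemma vsum_add {A} (l : list A) (F F' : A -> V) :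
  vsum l (fun s => vadd (F s) (F' s)) = vadd (vsum l F) (vsum l F').
Proof.
  induction l as [|a l IH]; simpl; [symmetry; apply vadd_0|].
  rewrite IH; apply vadd_vaddC.
Qed.

Lemma vsum_sub {A} (l : list A) (F F' : A -> V) :
  vsum l (fun s => vsub (F s) (F' s)) = vsub (vsum l F) (vsum l F').
Proof.
  induction l as [|a l IH]; simpl; [symmetry; apply vadd_opp|].
  rewrite IH; apply vsub_vaddC.
Qed.

Lemma vsum_const {A} (l : list A) b : vsum l (fun _ => b) = vscal (INR (length l)) b.
Proof.
  induction l as [|a l IH]; [symmetry; apply vscal_0|].
  change (vadd b (vsum l (fun _ => b)) = vscal (INR (S (length l))) b).
  rewrite IH, vadd_comm.
  rewrite <- (vscal_1 V b) at 2; rewrite <- vscal_distr_s, S_INR; reflexivity.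
Qed.

Lemma inner_add_r u v w : inner u (vadd v w) = inner u v + inner u w.
Proof. rewrite inner_sym, inner_add_l, (inner_sym _ v), (inner_sym _ w); reflexivity. Qed.

Lemma inner_scal_r (k : R) u v : inner u (vscal k v) = k * inner u v.
Proof. rewrite inner_sym, inner_scal_l, inner_sym; reflexivity. Qed.

Lemma inner_sub_sq a b : inner (vsub a b) (vsub a b) = inner a a - 2 * inner a b + inner b b.
Proof.
  rewrite vsub_scal, inner_add_l, !inner_add_r, !inner_scal_l, !inner_scal_r, (inner_sym _ b a).
  ring.
Qed.

Lemma inner_vsum_l {A} (l : list A) (F : A -> V) w :
  inner (vsum l F) w = fold_right (fun s acc => inner (F s) w + acc) 0 l.
Proof.
  induction l as [|a l IH]; simpl.
  - rewrite <- (vscal_0 vzero), inner_scal_l; ring.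
  - rewrite inner_add_l, IH; reflexivity.
Qed.

Lemma hnorm_le_iff u (M : R) : 0 <= M -> hnorm u <= M <-> inner u u <= M * M.
Proof.
  intro HM; unfold hnorm; rewrite <- (sqrt_square M HM) at 1; split.
  - apply sqrt_le_0; [apply inner_pos | apply Rmult_le_pos; lra].
  - apply sqrt_le_1_alt.
Qed.

Lemma hnorm_sq u : hnorm u * hnorm u = inner u u.
Proof. unfold hnorm; apply sqrt_sqrt, inner_pos. Qed.

Section Linear.
Variable L : V -> V.
Hypothesis L_linear : is_linear L.

Lemma linear_vzero : L vzero = vzero.
Proof.
  destruct L_linear as [_ HZ].
  rewrite <- (vscal_0 vzero), HZ, !vscal_0; reflexivity.
Qed.

Lemma linear_vsum {A} (l : list A) F : L (vsum l F) = vsum l (fun s => L (F s)).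
Proof.
  induction l as [|a l IH]; simpl; [apply linear_vzero|].
  destruct L_linear as [HD _]; rewrite HD, IH; reflexivity.
Qed.

Lemma linear_vsub u v : L (vsub u v) = vsub (L u) (L v).
Proof. destruct L_linear as [HD HZ]; rewrite !vsub_scal, HD, HZ; reflexivity. Qed.

End Linear.
End VectorAlgebra.

Definition rsum {A} (l : list A) (F : A -> R) : R := fold_right (fun s acc => F s + acc) 0 l.

Lemma length_pos {A} (l : list A) : l <> [] -> 0 < INR (length l).
Proof. destruct l; [contradiction|]; intros _; apply lt_0_INR; simpl; lia. Qed.

Lemma rsum_cons {A} (a : A) l F : rsum (a :: l) F = F a + rsum l F.
Proof. reflexivity. Qed.

Lemma rsum_ext {A} (l : list A) F F' : (forall s, In s l -> F s = F' s) -> rsum l F = rsum l F'.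
Proof.
  induction l as [|a l IH]; intro H; simpl; [reflexivity|].
  rewrite (H a (or_introl eq_refl)), (IH (fun s Hs => H s (or_intror Hs))); reflexivity.
Qed.

Lemma rsum_nonneg {A} (l : list A) F : (forall s, In s l -> 0 <= F s) -> 0 <= rsum l F.
Proof.
  induction l as [|a l IH]; intro H; simpl; [lra|].
  pose proof (H a (or_introl eq_refl)).
  pose proof (IH (fun s Hs => H s (or_intror Hs))); lra.
Qed.

Lemma rsum_le_const {A} (l : list A) F m :
  (forall s, In s l -> F s <= m) -> rsum l F <= INR (length l) * m.
Proof.
  induction l as [|a l IH]; intro H; [simpl; lra|].
  rewrite rsum_cons; cbn [length].
  pose proof (H a (or_introl eq_refl)).
  pose proof (IH (fun s Hs => H s (or_intror Hs))).
  rewrite S_INR; lra.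
Qed.

Lemma rsum_eq0_nonneg {A} (l : list A) F :
  (forall s, In s l -> 0 <= F s) -> rsum l F = 0 -> forall s, In s l -> F s = 0.
Proof.
  induction l as [|a l IH]; intros H H0 s Hs; simpl in *; [contradiction|].
  pose proof (H a (or_introl eq_refl)).
  pose proof (rsum_nonneg l F (fun s Hs => H s (or_intror Hs))).
  destruct Hs as [<-|Hs]; [lra|].
  apply IH; auto; lra.
Qed.

Lemma rsum_quadratic {A} (l : list A) p q (k : R) :
  rsum l (fun s => p s - 2 * q s + k) = rsum l p - 2 * rsum l q + INR (length l) * k.
Proof.
  induction l as [|a l IH]; [simpl; ring|].
  rewrite !rsum_cons, IH; cbn [length]; rewrite S_INR; ring.
Qed.

(* The averaging operator H at a point, as a function of the values it averages. *)
Definition lazy_mean {V : HilbertSpace} {A} (l : list A) (a : A -> V) (a0 : V) : V :=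
  vscal (1/2) (vadd (vscal (1 / INR (length l)) (vsum l a)) a0).

Section LazyMean.
Variables (V : HilbertSpace) (A : Type) (l : list A) (a : A -> V) (a0 : V).
Hypothesis l_nonempty : l <> [].

Local Notation w := (lazy_mean l a a0).
Local Notation n := (INR (length l)).

Let dev (v : V) := inner (vsub v w) (vsub v w).

Lemma dev_nonneg v : 0 <= dev v.
Proof. apply inner_pos. Qed.

(* The variance identity for the weights 1/(2n) and 1/2, multiplied by 2n. *)
Lemma lazy_mean_variance :
  rsum l (fun s => dev (a s)) + n * dev a0
  = rsum l (fun s => inner (a s) (a s)) + n * inner a0 a0 - 2 * n * inner w w.
Proof.
  pose proof (length_pos l l_nonempty).
  assert (Hww : inner w w = 1/2 * (1/n * rsum l (fun s => inner (a s) w) + inner a0 w)).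
  { unfold lazy_mean at 1.
    rewrite inner_scal_l, inner_add_l, inner_scal_l, inner_vsum_l; reflexivity. }
  unfold dev.
  rewrite (rsum_ext l _ (fun s => inner (a s) (a s) - 2 * inner (a s) w + inner w w))
    by (intros; apply inner_sub_sq).
  rewrite rsum_quadratic, inner_sub_sq, Hww.
  field; lra.
Qed.

Section Bounded.
Variable M : R.
Hypothesis a_bounded : forall s, In s l -> hnorm (a s) <= M.
Hypothesis a0_bounded : hnorm a0 <= M.

Lemma bound_nonneg : 0 <= M.
Proof. pose proof (sqrt_pos (inner a0 a0)); unfold hnorm in *; lra. Qed.

Lemma lazy_mean_deviation_le :
  rsum l (fun s => dev (a s)) + n * dev a0 <= 2 * n * (M * M - inner w w).
Proof.
  pose proof (length_pos l l_nonempty); pose proof bound_nonneg.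
  assert (Hsum : rsum l (fun s => inner (a s) (a s)) <= n * (M * M)).
  { apply rsum_le_const; intros s Hs; apply hnorm_le_iff; auto. }
  pose proof (proj1 (hnorm_le_iff V a0 M bound_nonneg) a0_bounded).
  rewrite lazy_mean_variance; nra.
Qed.

Lemma hnorm_lazy_mean_le : hnorm w <= M.
Proof.
  pose proof (length_pos l l_nonempty); pose proof bound_nonneg.
  pose proof lazy_mean_deviation_le.
  pose proof (rsum_nonneg l (fun s => dev (a s)) (fun s _ => dev_nonneg (a s))).
  pose proof (dev_nonneg a0).
  apply hnorm_le_iff; auto; nra.
Qed.

Lemma hnorm_lazy_mean_eq : hnorm w = M -> forall s, In s l -> a s = a0.
Proof.
  intros Heq s Hs; pose proof (length_pos l l_nonempty).
  pose proof lazy_mean_deviation_le as Hdev.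
  rewrite <- (hnorm_sq V w), Heq, Rminus_diag, Rmult_0_r in Hdev.
  pose proof (rsum_nonneg l (fun s => dev (a s)) (fun s _ => dev_nonneg (a s))).
  pose proof (dev_nonneg a0).
  assert (Hsum : rsum l (fun s => dev (a s)) = 0) by nra.
  assert (Ha0 : dev a0 = 0) by nra.
  pose proof (rsum_eq0_nonneg l _ (fun s _ => dev_nonneg (a s)) Hsum s Hs) as Has.
  transitivity (lazy_mean l a a0); [|symmetry]; apply vsub_eq0, inner_def; assumption.
Qed.

End Bounded.
End LazyMean.

Section Laplacian.
Variables (G : Type) (mul : G -> G -> G) (S : list G) (V : HilbertSpace).
Implicit Types f h : G -> V.

Lemma Hop_lazy_mean f x : Hop mul S f x = lazy_mean S (fun s => f (mul x s)) (f x).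
Proof. reflexivity. Qed.

Lemma Hop_sub f h x :
  Hop mul S (fun y => vsub (f y) (h y)) x = vsub (Hop mul S f x) (Hop mul S h x).
Proof.
  unfold Hop; rewrite (vsum_sub V S (fun s => f (mul x s)) (fun s => h (mul x s))).
  rewrite vscal_sub, vsub_vaddC, vscal_sub; reflexivity.
Qed.

Lemma Lap_Hop f x : Lap mul S (Hop mul S f) x = Hop mul S (Lap mul S f) x.
Proof. unfold Lap at 1 2; rewrite Hop_sub; reflexivity. Qed.

Hypothesis S_nonempty : S <> [].

Lemma Hop_affine (L : V -> V) b f x : is_linear L ->
  Hop mul S (fun y => vadd (L (f y)) b) x = vadd (L (Hop mul S f x)) b.
Proof.
  intros HL; pose proof (length_pos S S_nonempty) as Hn.
  pose proof HL as [HD HZ]; unfold Hop.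
  rewrite (vsum_add V S (fun s => L (f (mul x s))) (fun _ => b)), vsum_const.
  rewrite HZ, HD, HZ, linear_vsum by assumption.
  rewrite (vscal_distr_v _ (1 / INR (length S))), vscal_assoc.
  replace (1 / INR (length S) * INR (length S)) with 1 by (field; lra).
  rewrite vscal_1, vadd_vaddC, vscal_distr_v; f_equal.
  rewrite <- (vscal_1 V b) at 1 2; rewrite <- vscal_distr_s, vscal_assoc.
  replace (1/2 * (1 + 1)) with 1 by field; apply vscal_1.
Qed.

Lemma Lap_affine (L : V -> V) b f x : is_linear L ->
  Lap mul S (fun y => vadd (L (f y)) b) x = L (Lap mul S f x).
Proof.
  intros HL; unfold Lap; rewrite Hop_affine, vsub_addr, linear_vsub by assumption.
  reflexivity.
Qed.

Hypothesis mulA : forall x y z, mul x (mul y z) = mul (mul x y) z.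

Lemma Lap_translate g f x : Lap mul S f (mul g x) = Lap mul S (fun y => f (mul g y)) x.
Proof.
  assert (E : (fun s => f (mul (mul g x) s)) = (fun s => f (mul g (mul x s))))
    by (apply functional_extensionality; intro; rewrite mulA; reflexivity).
  unfold Lap, Hop; rewrite E; reflexivity.
Qed.

(* L is the linear part of rho g. *)
Lemma Lap_equivariant (rho : G -> V -> V) f :
  (forall g, is_affine (rho g)) -> equivariant mul rho f ->
  forall g, exists L, is_linear L /\ forall x, Lap mul S f (mul g x) = L (Lap mul S f x).
Proof.
  intros Haff Heq g; destruct (Haff g) as [L [b [HL Hb]]].
  exists L; split; [assumption|]; intro x.
  assert (E : (fun y => f (mul g y)) = (fun y => vadd (L (f y)) b))
    by (apply functional_extensionality; intro y; rewrite Heq, Hb; reflexivity).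
  rewrite Lap_translate, E; apply Lap_affine; assumption.
Qed.

End Laplacian.

Section Invariance.
Variables (G : Type) (mul : G -> G -> G) (inv : G -> G) (e : G) (S : list G) (B : Type).
Hypothesis mulA : forall x y z, mul x (mul y z) = mul (mul x y) z.
Hypothesis mulg1 : forall x, mul x e = x.
Hypothesis mulVg : forall x, mul (inv x) x = e.

(* The invariance of D under right multiplication by S at one point x0 is
   carried to any y by left multiplication with y x0^-1. *)
Lemma right_invariance_transport (D : G -> B) x0 :
  (forall g, exists T : B -> B, forall y, D (mul g y) = T (D y)) ->
  (forall s, In s S -> D (mul x0 s) = D x0) ->
  forall y s, In s S -> D (mul y s) = D y.
Proof.
  intros HT Hx0 y s Hs.
  assert (Hy : mul (mul y (inv x0)) x0 = y) by (rewrite <- mulA, mulVg, mulg1; reflexivity).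
  set (g := mul y (inv x0)) in Hy.
  destruct (HT g) as [T HTg].
  rewrite <- Hy, <- mulA, (HTg (mul x0 s)), (HTg x0), Hx0 by assumption; reflexivity.
Qed.

Hypothesis mul1g : forall x, mul e x = x.

Lemma right_invariant_const (D : G -> B) :
  generates mul inv e S -> (forall y s, In s S -> D (mul y s) = D y) ->
  forall y, D y = D e.
Proof.
  intros Hgen HS y; rewrite <- (mul1g y).
  apply (Hgen (fun h => forall y, D (mul y h) = D y)).
  - intro z; rewrite mulg1; reflexivity.
  - intros a c Ha Hc z; rewrite mulA, Hc, Ha; reflexivity.
  - intros a Ha z; rewrite <- (Ha (mul z (inv a))), <- mulA, mulVg, mulg1; reflexivity.
  - intros s Hs z; apply HS; assumption.
Qed.

End Invariance.

Lemma max_nbhd_ge_self {G} (mul : G -> G -> G) S g x : g x <= max_nbhd mul S g x.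
Proof.
  unfold max_nbhd; induction S as [|s S IH]; simpl; [lra|].
  eapply Rle_trans; [apply IH | apply Rmax_r].
Qed.

Lemma max_nbhd_ge {G} (mul : G -> G -> G) S g x s : In s S -> g (mul x s) <= max_nbhd mul S g x.
Proof.
  unfold max_nbhd; induction S as [|t S IH]; simpl; [tauto|].
  intros [<-|Hs]; [apply Rmax_l|].
  eapply Rle_trans; [apply IH; assumption | apply Rmax_r].
Qed.

Theorem mainTheorem3 (G : Type) (mul : G -> G -> G) (inv : G -> G) (e : G)
  (S : list G) (V : HilbertSpace) (rho : G -> V -> V) (f : G -> V) :
  is_group mul inv e ->
  fin_sym_gen_set mul inv e S ->
  is_affine_action mul e rho ->
  equivariant mul rho f ->
  (forall x : G,
     hnorm (Lap mul S (Hop mul S f) x)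
       <= max_nbhd mul S (fun y => hnorm (Lap mul S f y)) x) /\
  ((exists x : G,
     hnorm (Lap mul S (Hop mul S f) x)
       = max_nbhd mul S (fun y => hnorm (Lap mul S f y)) x) ->
   exists c : V, forall x : G, Lap mul S f x = c).
Proof.
  intros [mulA [mul1g [mulg1 [_ mulVg]]]] [_ [HS [_ Hgen]]] [Haff _] Heq.
  set (D := Lap mul S f).
  set (M := max_nbhd mul S (fun y => hnorm (D y))).
  assert (Hnbhd : forall x, (forall s, In s S -> hnorm (D (mul x s)) <= M x) /\ hnorm (D x) <= M x).
  { intro x; split; [intros s Hs; apply (max_nbhd_ge mul S (fun y => hnorm (D y)))|
                     apply (max_nbhd_ge_self mul S (fun y => hnorm (D y)))]; assumption. }
  split.
  - intro x; rewrite Lap_Hop, Hop_lazy_mean.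
    destruct (Hnbhd x); apply hnorm_lazy_mean_le; assumption.
  - intros [x0 Hx0]; rewrite Lap_Hop, Hop_lazy_mean in Hx0.
    destruct (Hnbhd x0) as [Hnear Hself].
    pose proof (hnorm_lazy_mean_eq _ _ S _ _ HS _ Hnear Hself Hx0) as Hlocal.
    exists (D e); apply (right_invariant_const G mul inv e S V mulA mulg1 mulVg mul1g D Hgen).
    apply (right_invariance_transport G mul inv e S V mulA mulg1 mulVg D x0); [|assumption].
    intro g; destruct (Lap_equivariant G mul S V HS mulA rho f Haff Heq g) as [L [_ HL]].
    exists L; exact HL.
Qed.
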